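(* Let $n$ be a positive integer. (a) $\mu(n,2)=\lceil 2n/3\rceil$. (b) If $n\ge 2$, then $\mu^*(n,2)=2\lceil n/3\rceil$, and this is the least even integer not less than $\mu(n,2)$.
   Context: Let $\mathbb F_2=\{0,1\}$ be the field with two elements. For $u\in\mathbb F_2^n$, $|u|$ denotes the Hamming weight of $u$ (the number of entries equal to $1$). A wiring on $n$ vertices is a matrix $W=(w_{i,j})\in M(n,n;\mathbb F_2)$ with $w_{i,i}=1$ for all $i$ (pressing button $j$ toggles bulb $i$ iff $w_{i,j}=1$). The degree of vertex $j$ is the number of $1$s in the $j$th column of $W$, and $\deg(W)$ is the maximum degree over all vertices. For $c\in\mathbb F_2^n$ (initial configuration), $M(W,c)=\max\{|Wx+c| : x\in\mathbb F_2^n\}$. For $n,m\ge1$, $A(n,m)$ is the set of wirings on $n$ vertices with $\deg(W)\le m$; for $n\ge m$, $A^*(n,m)$ is the set of wirings on $n$ vertices in which every vertex has degree exactly $m$. Define $\mu(n,m)=\min\{M(W,0): W\in A(n,m)\}$ and, for $n\ge m$, $\mu^*(n,m)=\min\{M(W,0): W\in A^*(n,m)\}$. *)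

From mathcomp Require Import all_boot all_order all_algebra.
Set Implicit Arguments. Unset Strict Implicit. Unset Printing Implicit Defensive.
Import GRing.Theory.
Local Open Scope ring_scope.

Definition hwt (n : nat) (u : 'cV['F_2]_n) : nat := #|[set i | u i 0 != 0]|.

Definition is_wiring (n : nat) (W : 'M['F_2]_n) : bool := [forall i, W i i == 1].

Definition vdeg (n : nat) (W : 'M['F_2]_n) (j : 'I_n) : nat := #|[set i | W i j != 0]|.

Definition wdeg (n : nat) (W : 'M['F_2]_n) : nat := (\max_(j : 'I_n) vdeg W j)%N.

Definition Mval (n : nat) (W : 'M['F_2]_n) (c : 'cV['F_2]_n) : nat :=
  (\max_(x : 'cV['F_2]_n) hwt (W *m x + c))%N.

Definition inA (n m : nat) (W : 'M['F_2]_n) : bool := is_wiring W && (wdeg W <= m)%N.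
Definition inAstar (n m : nat) (W : 'M['F_2]_n) : bool :=
  is_wiring W && [forall j, vdeg W j == m].

(* minimum of M(W,0) over a set of wirings; the default value n is only used
   if the set is empty, which never happens in the theorem's range. *)
Definition minM (n : nat) (P : pred 'M['F_2]_n) : nat :=
  (\big[minn/n]_(W : 'M['F_2]_n | P W) Mval W 0)%N.

Definition mu (n m : nat) : nat := minM (@inA n m).
Definition mu_star (n m : nat) : nat := minM (@inAstar n m).

Definition ceil_div (a b : nat) : nat := ((a + b.-1) %/ b)%N.

From mathcomp Require Import all_boot all_order all_algebra zify.
Set Implicit Arguments. Unset Strict Implicit. Unset Printing Implicit Defensive.
Import GRing.Theory.
Local Open Scope ring_scope.

(* A wiring of degree at most 2 is the matrix of a map [h] on the vertices:
   column [j] has its 1s in rows [j] and [h j].  Take [x] maximizing the weight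
   of [W x] and let [O] be the set of zeros of [W x].  No vector flipping one
   or two positions of [O] lies in the range of [W], while [e_y + e_z] does
   whenever [y] and [z] are in the same component of the functional graph of
   [h].  So every component contains at most one zero [b], and it also
   contains [h b] and a third vertex, whence [3 |O| <= n].  When all degrees
   equal 2 every column of [W] sums to 0, so [|W x|] is even.  Conversely, if
   [h] rotates [t] disjoint triangles then each triangle carries a zero of
   [W x], its entries summing to 0; the remaining vertices are fixed points
   for [mu], or are paired by transpositions for [mu_star]. *)

Lemma F2_eq1 (x : 'F_2) : x != 0 -> x = 1.
Proof. by case: x => [[|[|k]] hk] //= _; apply/eqP. Qed.

Lemma F2_addxx (x : 'F_2) : x + x = 0.
Proof. by case: x => [[|[|k]] hk] //=; apply/eqP. Qed.

Lemma F2_natr_odd k : k%:R = (odd k)%:R :> 'F_2.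
Proof. by elim: k => // k IH; rewrite mulrS IH /=; case: (odd k); apply/eqP. Qed.

Lemma F2_cV_addxx n (u : 'cV['F_2]_n) : u + u = 0.
Proof. by apply/matrixP => i j; rewrite !mxE F2_addxx. Qed.

Lemma hwtD_delta n (v : 'cV['F_2]_n) b :
  v b 0 = 0 -> hwt (v + delta_mx b 0) = (hwt v).+1.
Proof.
move=> vb0; rewrite /hwt.
have -> : [set i | (v + delta_mx b 0) i 0 != 0] = b |: [set i | v i 0 != 0].
  apply/setP => i; rewrite !inE !mxE eqxx andbT.
  by case: (eqVneq i b) => [->|_]; rewrite ?vb0 ?add0r ?addr0.
by rewrite cardsU1 inE vb0 eqxx.
Qed.

Lemma sum_hwt n (v : 'cV['F_2]_n) : \sum_i v i 0 = (hwt v)%:R.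
Proof.
rewrite (bigID (fun i => v i 0 != 0)) /= [X in _ + X]big1 => [|i /negbNE/eqP //].
rewrite addr0 /hwt -sumr_const; apply: eq_big => [i|i /F2_eq1 //].
by rewrite inE.
Qed.

Lemma card_zeros n (v : 'cV['F_2]_n) : #|[set i | v i 0 == 0]| = (n - hwt v)%N.
Proof.
rewrite [hwt v]cardsCs card_ord subKn; last by rewrite -[X in (_ <= X)%N]card_ord max_card.
by apply: eq_card => i; rewrite !inE negbK.
Qed.

Lemma Mval_maximizer n (W : 'M['F_2]_n) (c : 'cV['F_2]_n) :
  exists x0, Mval W c = hwt (W *m x0 + c) /\
             forall y, (hwt (W *m y + c) <= hwt (W *m x0 + c))%N.
Proof.
have [x0 _ x0_max] := @arg_maxnP _ 0 xpredT (fun x => hwt (W *m x + c)) isT.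
exists x0; split=> [|y]; last exact: x0_max.
apply/anti_leq/andP; split; last exact: (@leq_bigmax _ (fun x => hwt (W *m x + c))).
by apply/bigmax_leqP => y _; apply: x0_max.
Qed.

Definition in_range n (W : 'M['F_2]_n) (u : 'cV['F_2]_n) := exists y, W *m y = u.

Lemma in_range0 n (W : 'M['F_2]_n) : in_range W 0.
Proof. by exists 0; rewrite mulmx0. Qed.

Lemma in_rangeD n (W : 'M['F_2]_n) u v :
  in_range W u -> in_range W v -> in_range W (u + v).
Proof. by move=> [y <-] [z <-]; exists (y + z); rewrite mulmxDr. Qed.

Section Maximizer.

Variables (n : nat) (W : 'M['F_2]_n) (x0 : 'cV['F_2]_n).
Hypothesis x0_max : forall y, (hwt (W *m y) <= hwt (W *m x0))%N.
Let v := W *m x0.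

(* Adding an element of the range that only flips zeros of [v] would beat [x0]. *)
Lemma maximizer_delta_notin_range b : v b 0 = 0 -> ~ in_range W (delta_mx b 0).
Proof.
move=> vb0 [y Wy]; have := x0_max (x0 + y).
by rewrite mulmxDr Wy -/v hwtD_delta // ltnn.
Qed.

Lemma maximizer_delta2_notin_range b b' : v b 0 = 0 -> v b' 0 = 0 -> b != b' ->
  ~ in_range W (delta_mx b 0 + delta_mx b' 0).
Proof.
move=> vb0 vb'0 bb' [y Wy]; have := x0_max (x0 + y).
have vbb' : (v + delta_mx b 0) b' 0 = 0.
  by rewrite mxE vb'0 mxE eq_sym (negbTE bb') add0r.
by rewrite mulmxDr Wy -/v addrA !hwtD_delta // ltnNge leqnSn.
Qed.

End Maximizer.

(* Every wiring of degree at most 2 has this form: column [j] carries its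
   diagonal 1 and possibly one more 1 in row [h j]; [h j = j] means degree 1. *)
Definition wiring_of n (h : 'I_n -> 'I_n) : 'M['F_2]_n :=
  \matrix_(i, j) ((i == j) || (i == h j))%:R.

Definition linked T (h : T -> T) (x y : T) := exists s t, iter s h x = iter t h y.

Lemma linked_trans T (h : T -> T) y x z : linked h x y -> linked h y z -> linked h x z.
Proof.
move=> [s [t Exy]] [s' [t' Eyz]]; exists (s + s')%N, (t + t')%N.
by rewrite addnC iterD Exy -iterD addnC iterD Eyz -iterD.
Qed.

Lemma linked_sym T (h : T -> T) x y : linked h x y -> linked h y x.
Proof. by move=> [s [t E]]; exists t, s. Qed.

Section WiringOfMap.

Variables (n : nat) (h : 'I_n -> 'I_n).
Local Notation W := (wiring_of h).

Lemma vdeg_wiring_of j : vdeg W j = #|[set j; h j]|.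
Proof. by apply: eq_card => i; rewrite !inE mxE; case: (_ || _). Qed.

Lemma wiring_of_inA : inA 2 W.
Proof.
apply/andP; split; first by apply/forallP => i; rewrite mxE eqxx.
by apply/bigmax_leqP => j _; rewrite vdeg_wiring_of cards2; case: (_ != _).
Qed.

Lemma wiring_of_inAstar : (forall j, h j != j) -> inAstar 2 W.
Proof.
move=> hP; apply/andP; split; first by apply/forallP => i; rewrite mxE eqxx.
by apply/forallP => j; rewrite vdeg_wiring_of cards2 (eq_sym j) hP.
Qed.

Lemma wiring_of_delta j :
  W *m delta_mx j 0 = \col_i ((i == j) || (i == h j))%:R.
Proof. by rewrite -colE; apply/matrixP => i k; rewrite !mxE. Qed.

Lemma in_range_fixed j : h j = j -> in_range W (delta_mx j 0).
Proof.
move=> hj; exists (delta_mx j 0); rewrite wiring_of_delta hj.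
by apply/matrixP => i k; rewrite (ord1 k) !mxE orbb andbT.
Qed.

Lemma in_range_edge j : in_range W (delta_mx j 0 + delta_mx (h j) 0).
Proof.
case: (eqVneq (h j) j) => [->|hj]; first by rewrite F2_cV_addxx; apply: in_range0.
exists (delta_mx j 0); rewrite wiring_of_delta.
apply/matrixP => i k; rewrite (ord1 k) !mxE !andbT.
case: (eqVneq i j) => [->|_] /=; last by rewrite add0r.
by rewrite eq_sym (negbTE hj) addr0.
Qed.

Lemma in_range_iter p m : in_range W (delta_mx p 0 + delta_mx (iter m h p) 0).
Proof.
elim: m => [|m IH] /=; first by rewrite F2_cV_addxx; apply: in_range0.
set q := iter m h p.
have -> : delta_mx p 0 + delta_mx (h q) 0 =
          (delta_mx p 0 + delta_mx q 0) + (delta_mx q 0 + delta_mx (h q) 0) :> 'cV['F_2]_n.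
  by rewrite addrA -(addrA (delta_mx p 0)) F2_cV_addxx addr0.
by apply: in_rangeD => //; apply: in_range_edge.
Qed.

Lemma in_range_linked x y : linked h x y -> in_range W (delta_mx x 0 + delta_mx y 0).
Proof.
move=> [s [t E]]; have := in_rangeD (in_range_iter x s) (in_range_iter y t).
by rewrite E addrACA F2_cV_addxx addr0.
Qed.

(* Each column of [W] restricted to an [h]-closed fixpoint-free block has two 1s. *)
Lemma block_sum_wiring_of (B : {set 'I_n}) (x : 'cV['F_2]_n) :
  (forall j, (h j \in B) = (j \in B)) -> (forall j, j \in B -> h j != j) ->
  \sum_(i in B) (W *m x) i 0 = 0.
Proof.
move=> hB hP; under eq_bigr do rewrite mxE.
rewrite exchange_big /=; apply: big1 => k _; rewrite -mulr_suml.
suff -> : \sum_(i in B) W i k = 0 by rewrite mul0r.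
have [kB|kB] := boolP (k \in B).
  rewrite (bigD1 k) //= (bigD1 (h k)) /=; last by rewrite hB kB hP.
  rewrite big1 => [|i /andP[/andP[_ ik] ihk]]; last by rewrite mxE (negbTE ik) (negbTE ihk).
  by rewrite !mxE !eqxx orbT addr0 F2_addxx.
apply: big1 => i iB; rewrite mxE.
by case: (eqVneq i k) => [ik|_]; case: (eqVneq i (h k)) => [ihk|_] //;
  move: iB; rewrite ?ik ?ihk ?hB (negbTE kB).
Qed.

Lemma hwt_wiring_of_even x : (forall j, h j != j) -> ~~ odd (hwt (W *m x)).
Proof.
move=> hP; have hT j : (h j \in [set: 'I_n]) = (j \in [set: 'I_n]) by rewrite !inE.
have := block_sum_wiring_of x hT (fun j _ => hP j); under eq_bigl do rewrite inE.
by rewrite sum_hwt F2_natr_odd; case: (odd _).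
Qed.

Lemma odd_block_zero (B : {set 'I_n}) (x : 'cV['F_2]_n) :
  (forall j, (h j \in B) = (j \in B)) -> (forall j, j \in B -> h j != j) ->
  odd #|B| -> exists2 i, i \in B & (W *m x) i 0 = 0.
Proof.
move=> hB hP oddB.
have [/exists_inP [i iB /eqP]|/exists_inPn nz] := boolP [exists i in B, (W *m x) i 0 == 0].
  by exists i.
have := block_sum_wiring_of x hB hP.
rewrite (eq_bigr (fun _ => 1)) => [|i iB]; last by apply: F2_eq1; exact: nz.
by rewrite sumr_const F2_natr_odd oddB => /eqP.
Qed.

Lemma wiring_of_swapped_rows b (x : 'cV['F_2]_n) : h (h b) = b ->
  (forall k, h k \in [set b; h b] -> k \in [set b; h b]) ->
  (W *m x) (h b) 0 = (W *m x) b 0.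
Proof.
move=> hhb closed; rewrite !mxE; apply: eq_bigr => k _; rewrite !mxE.
suff -> : (h b == k) || (h b == h k) = (b == k) || (b == h k) by [].
have [kb|kb] := boolP (k \in [set b; h b]).
  by case/set2P: kb => ->; rewrite ?hhb !eqxx !orbT.
have hk : h k \notin [set b; h b] by apply: contra kb; apply: closed.
move: kb hk; rewrite !inE !negb_or => /andP[kb khb] /andP[hkb hkhb].
rewrite ![b == _]eq_sym ![h b == _]eq_sym.
by rewrite (negbTE kb) (negbTE khb) (negbTE hkb) (negbTE hkhb).
Qed.

End WiringOfMap.

Section ZerosOfMaximizer.

Variables (n : nat) (h : 'I_n -> 'I_n) (x0 : 'cV['F_2]_n).
Hypothesis x0_max : forall y, (hwt (wiring_of h *m y) <= hwt (wiring_of h *m x0))%N.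
Let v := wiring_of h *m x0.
Let O := [set i | v i 0 == 0].

Lemma zeros_linked_eq b b' : b \in O -> b' \in O -> linked h b b' -> b = b'.
Proof.
rewrite !inE => /eqP vb /eqP vb' bb'; case: (eqVneq b b') => // nbb'.
by case: (maximizer_delta2_notin_range x0_max vb vb' nbb' (in_range_linked bb')).
Qed.

Lemma zero_succ_neq b : b \in O -> h b != b.
Proof.
rewrite inE => /eqP vb; apply/eqP => hb.
exact: (maximizer_delta_notin_range x0_max vb (in_range_fixed hb)).
Qed.

Lemma zero_succ_notin b : b \in O -> h b \notin O.
Proof.
move=> bO; apply/negP => hbO; have := zero_succ_neq bO.
by rewrite (zeros_linked_eq hbO bO) ?eqxx //; exists 0%N, 1%N.
Qed.

Lemma zero_succ2_neq b : b \in O -> h (h b) != h b.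
Proof.
move=> bO; move: (bO); rewrite inE => /eqP vb; apply/eqP => hhb.
apply: (maximizer_delta_notin_range x0_max vb).
have := in_rangeD (in_range_edge h b) (in_range_fixed hhb).
by rewrite -addrA F2_cV_addxx addr0.
Qed.

(* Besides [b] and [h b], the component of a zero [b] contains a third vertex:
   either [h (h b)], or, when [b] and [h b] form a 2-cycle, another preimage;
   otherwise rows [b] and [h b] of the wiring coincide, so [h b] is a zero too. *)
Lemma zero_third_vertex b : b \in O -> exists c, [/\ c != b, c != h b & linked h c b].
Proof.
move=> bO; have [hhb|hhb] := eqVneq (h (h b)) b; last first.
  by exists (h (h b)); split; [|exact: zero_succ2_neq|exists 0%N, 2%N].
have [/existsP [c /andP[cnot hc]]|/existsPn closed] :=
  boolP [exists c, (c \notin [set b; h b]) && (h c \in [set b; h b])].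
  move: cnot; rewrite !inE negb_or => /andP[cb chb]; exists c; split => //.
  by case/set2P: hc => hc; [exists 1%N, 0%N | exists 1%N, 1%N].
case/negP: (zero_succ_notin bO); rewrite inE -/v wiring_of_swapped_rows //.
- by move: bO; rewrite inE.
- by move=> k hk; move: (closed k); rewrite hk andbT negbK.
Qed.

Lemma card_zeros_wiring_of : (3 * #|O| <= n)%N.
Proof.
have /fin_all_exists [c cP] : forall b,
    exists c, b \in O -> [/\ c != b, c != h b & linked h c b].
  move=> b; have [bO|/negbTE bO] := boolP (b \in O).
    by have [c Hc] := zero_third_vertex bO; exists c.
  by exists b => bO'; rewrite bO' in bO.
pose psi (p : 'I_n * 'I_3) := tnth [tuple p.1; h p.1; c p.1] p.2.
have psi_linked p : p.1 \in O -> linked h (psi p) p.1.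
  case: p => b [[|[|[|//]]] lt3] /= bO; rewrite /psi /tnth /=.
  - by exists 0%N, 0%N.
  - by exists 0%N, 1%N.
  - by case: (cP b bO).
have psi_inj : {in setX O setT &, injective psi}.
  move=> [b k] [b' k'] /setXP[bO _] /setXP[b'O _] E.
  have eqbb' : b = b'.
    apply: (zeros_linked_eq bO b'O).
    apply: (linked_trans (linked_sym (psi_linked (b, k) bO))).
    by rewrite E; apply: psi_linked.
  subst b'; congr (_, _); apply: (tuple_uniqP _) E.
  have [cb chb _] := cP b bO.
  by rewrite /= !inE negb_or eq_sym zero_succ_neq //= !(eq_sym _ (c b)) cb chb.
have := card_in_imset psi_inj; rewrite cardsX cardsT card_ord mulnC => <-.
by rewrite -[X in (_ <= X)%N]card_ord max_card.
Qed.

End ZerosOfMaximizer.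

Lemma Mval_wiring_of_ge n (h : 'I_n -> 'I_n) : (3 * (n - Mval (wiring_of h) 0) <= n)%N.
Proof.
have [x0 [-> x0_max]] := Mval_maximizer (wiring_of h) 0.
rewrite addr0 -card_zeros; apply: card_zeros_wiring_of => y.
by have := x0_max y; rewrite !addr0.
Qed.

Lemma Mval_wiring_of_even n (h : 'I_n -> 'I_n) :
  (forall j, h j != j) -> ~~ odd (Mval (wiring_of h) 0).
Proof.
move=> hP; have [x0 [-> _]] := Mval_maximizer (wiring_of h) 0.
by rewrite addr0 hwt_wiring_of_even.
Qed.

Lemma cards3 (T : finType) (a b c : T) :
  a != b -> a != c -> b != c -> #|[set a; b; c]| = 3%N.
Proof. by move=> ab ac bc; rewrite -setUA cardsU1 cards2 bc !inE negb_or ab ac. Qed.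

Lemma wiring_offdiag_uniq n (W : 'M['F_2]_n) j i i' :
  is_wiring W -> (vdeg W j <= 2)%N -> i != j -> i' != j ->
  W i j != 0 -> W i' j != 0 -> i = i'.
Proof.
move=> /forallP Wdiag degj ij i'j Wij Wi'j; apply/eqP; apply: contraTT degj => ii'.
have : [set j; i; i'] \subset [set k | W k j != 0].
  apply/subsetP => k; rewrite !inE -orbA => /or3P[] /eqP->; rewrite ?(eqP (Wdiag j)) //.
move/subset_leq_card; rewrite cards3 // 1?eq_sym // => deg3.
by rewrite -ltnNge /vdeg.
Qed.

Lemma deg2_wiring_eq_wiring_of n (W : 'M['F_2]_n) :
  is_wiring W -> (forall j, (vdeg W j <= 2)%N) ->
  exists h, W = wiring_of h /\ forall j, vdeg W j = 2%N -> h j != j.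
Proof.
move=> Wwiring deg2.
pose h j := odflt j [pick i | (i != j) && (W i j != 0)].
exists h; split.
  apply/matrixP => i j; rewrite mxE; case: (eqVneq i j) => [->|ij] /=.
    by rewrite (eqP (forallP Wwiring j)).
  rewrite /h; case: pickP => [i' /andP[i'j Wi'j]|none] /=; last first.
    by move/negbT: (none i); rewrite ij negbK (negbTE ij) => /eqP.
  have [Wij|Wij] := eqVneq (W i j) 0.
    by case: (eqVneq i i') => [ii'|//]; move: Wi'j; rewrite -ii' Wij eqxx.
  have ii' := wiring_offdiag_uniq Wwiring (deg2 j) ij i'j Wij Wi'j.
  by subst i'; rewrite eqxx (F2_eq1 Wij).
move=> j degj; rewrite /h; case: pickP => [i /andP[] //|none].
have : [set i | W i j != 0] \subset [set j].
  apply/subsetP => i; rewrite !inE; apply: contraTT => ij.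
  by move: (none i); rewrite ij /= => ->.
by move/subset_leq_card; rewrite cards1 -/(vdeg W j) degj.
Qed.

Lemma inA2_wiring_of n (W : 'M['F_2]_n) : inA 2 W -> exists h, W = wiring_of h.
Proof.
case/andP => Wwiring degW.
have deg2 j : (vdeg W j <= 2)%N.
  by apply: leq_trans degW; apply: (@leq_bigmax _ (fun j => vdeg W j)).
by have [h [-> _]] := deg2_wiring_eq_wiring_of Wwiring deg2; exists h.
Qed.

Lemma inAstar2_wiring_of n (W : 'M['F_2]_n) :
  inAstar 2 W -> exists2 h, W = wiring_of h & forall j, h j != j.
Proof.
case/andP => Wwiring /forallP deg2.
have [h [Weq hP]] := deg2_wiring_eq_wiring_of Wwiring (fun j => eq_leq (eqP (deg2 j))).
by exists h => // j; apply: hP; apply/eqP.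
Qed.

(* An odd [h]-closed block without fixed points always contains a zero of
   [W *m x], so [t] disjoint such blocks force [t] zeros. *)
Lemma Mval_wiring_of_le_blocks n (h : 'I_n -> 'I_n) t (B : 'I_t -> {set 'I_n}) :
  (forall k j, (h j \in B k) = (j \in B k)) -> (forall k j, j \in B k -> h j != j) ->
  (forall k, odd #|B k|) -> (forall k k', k != k' -> [disjoint B k & B k']) ->
  (Mval (wiring_of h) 0 <= n - t)%N.
Proof.
move=> hB hP oddB disjB; apply/bigmax_leqP => x _; rewrite addr0.
have /fin_all_exists2 [o oB o0] k := odd_block_zero x (hB k) (hP k) (oddB k).
have o_inj : injective o.
  move=> k k' okk'; apply/eqP; apply: contraT => kk'.
  by move: (disjointFr (disjB k k' kk') (oB k)); rewrite okk' oB.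
have : [set o k | k in 'I_t] \subset [set i | (wiring_of h *m x) i 0 == 0].
  by apply/subsetP => _ /imsetP[k _ ->]; rewrite inE o0.
move/subset_leq_card; rewrite card_imset // card_ord card_zeros.
have := max_card [set i | (wiring_of h *m x) i 0 != 0]; rewrite card_ord -/(hwt _).
move: (hwt _) => w; lia.
Qed.

Definition triangle_succ (i : nat) : nat := (3 * (i %/ 3) + (i %% 3).+1 %% 3)%N.

Lemma card_triangle N k :
  (3 * k.+1 <= N.+1)%N -> #|[set i : 'I_N.+1 | (i %/ 3 == k)%N]| = 3%N.
Proof.
move=> kN.
have -> : [set i : 'I_N.+1 | (i %/ 3 == k)%N] =
          [set inord (3 * k); inord (3 * k + 1); inord (3 * k + 2)].
  by apply/setP => i; rewrite !inE -!val_eqE /= !inordK; lia.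
by rewrite cards3 // -val_eqE /= !inordK; lia.
Qed.

Lemma Mval_wiring_of_triangles_le N t (h : 'I_N.+1 -> 'I_N.+1) : (3 * t <= N.+1)%N ->
  (forall i : 'I_N.+1, (i < 3 * t)%N -> h i = triangle_succ i :> nat) ->
  (forall i : 'I_N.+1, (3 * t <= i)%N -> (3 * t <= h i)%N) ->
  (Mval (wiring_of h) 0 <= N.+1 - t)%N.
Proof.
move=> tN h_tri h_rest.
pose B (k : 'I_t) := [set i : 'I_N.+1 | (i %/ 3 == k)%N].
apply: (@Mval_wiring_of_le_blocks _ _ _ B) => [k j|k j|k|k k' kk'].
- rewrite !inE; have [jt|jt] := ltnP j (3 * t).
    by rewrite h_tri // /triangle_succ; congr (_ == _); lia.
  by have := h_rest j jt; have := ltn_ord k; lia.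
- rewrite inE => /eqP jk; apply/eqP => hj.
  by have := h_tri j; rewrite hj /triangle_succ; have := ltn_ord k; lia.
- by rewrite card_triangle //; have := ltn_ord k; lia.
- apply/pred0P => i /=; rewrite !inE; apply/negbTE/andP => -[/eqP ik /eqP ik'].
  by case/eqP: kk'; apply: val_inj; rewrite /= -ik -ik'.
Qed.

Lemma bigminn_le (T : eqType) (r : seq T) (P : pred T) (F : T -> nat) d w :
  w \in r -> P w -> (\big[minn/d]_(i <- r | P i) F i <= F w)%N.
Proof.
elim: r => // a r IH; rewrite inE big_cons => /orP[/eqP <-|wr] Pw.
  by rewrite Pw geq_minl.
by case: ifP => _; [apply: leq_trans (geq_minr _ _) (IH wr Pw) | apply: IH].
Qed.

Lemma minM_le n (P : pred 'M['F_2]_n) W : P W -> (minM P <= Mval W 0)%N.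
Proof. by move=> PW; apply: bigminn_le; rewrite ?mem_index_enum. Qed.

Lemma minM_ge n (P : pred 'M['F_2]_n) m : (m <= n)%N ->
  (forall W, P W -> (m <= Mval W 0)%N) -> (m <= minM P)%N.
Proof.
move=> mn Pm; apply: (big_ind (fun k => m <= k)%N) => // a b ma mb.
by rewrite leq_min ma mb.
Qed.

Lemma mu2_ge n (W : 'M['F_2]_n) : inA 2 W -> (ceil_div (2 * n) 3 <= Mval W 0)%N.
Proof.
case/inA2_wiring_of => h ->; have := Mval_wiring_of_ge h.
by rewrite /ceil_div; lia.
Qed.

Lemma mu_star2_ge n (W : 'M['F_2]_n) : inAstar 2 W -> (2 * ceil_div n 3 <= Mval W 0)%N.
Proof.
case/inAstar2_wiring_of => h -> hP.
have := Mval_wiring_of_ge h; have := Mval_wiring_of_even hP.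
by rewrite /ceil_div; lia.
Qed.

Lemma mu2_le N : (mu N.+1 2 <= N.+1 - N.+1 %/ 3)%N.
Proof.
set t := (N.+1 %/ 3)%N.
pose h (i : 'I_N.+1) : 'I_N.+1 := inord (if (i < 3 * t)%N then triangle_succ i else i).
apply: leq_trans (minM_le (wiring_of_inA h)) _.
apply: Mval_wiring_of_triangles_le => [|i it|i it].
- by rewrite /t; lia.
- by rewrite /h it inordK // /triangle_succ; rewrite /t in it; lia.
- by rewrite /h ltnNge it inordK.
Qed.

(* Triangles on the first [3 t] vertices and transpositions on the rest; when
   [N.+1 = 1 mod 3] one triangle fewer is used so that [N.+1 - 3 t] is even. *)
Lemma mu_star2_le N : (1 <= N)%N -> (mu_star N.+1 2 <= 2 * ceil_div N.+1 3)%N.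
Proof.
move=> N1.
set t := (if (N.+1 %% 3 == 1)%N then N.+1 %/ 3 - 1 else N.+1 %/ 3)%N.
have [tN even_rest tE] : [/\ (3 * t <= N.+1)%N, ~~ odd (N.+1 - 3 * t)
                             & (N.+1 - t = 2 * ceil_div N.+1 3)%N].
  by rewrite /t /ceil_div /=; case: ifP => /eqP ?; split; lia.
pose f (i : nat) := (if (i < 3 * t)%N then triangle_succ i
                     else if odd (i - 3 * t) then i.-1 else i.+1)%N.
have fP (i : 'I_N.+1) : [/\ (f i < N.+1)%N, f i != i,
    (i < 3 * t)%N -> f i = triangle_succ i & (3 * t <= i)%N -> (3 * t <= f i)%N].
  have := ltn_ord i; rewrite /f; case: ifP => it iN.
    by rewrite /triangle_succ; split; lia.
  by case: ifP => ho; split; lia.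
pose h (i : 'I_N.+1) : 'I_N.+1 := inord (f i).
have hE i : h i = f i :> nat by rewrite inordK //; case: (fP i).
have hP j : h j != j by rewrite -val_eqE /= hE; case: (fP j).
apply: leq_trans (minM_le (wiring_of_inAstar hP)) _.
rewrite -tE; apply: Mval_wiring_of_triangles_le => // i it; rewrite hE.
- by case: (fP i) => _ _ -> //.
- by case: (fP i) => _ _ _ ->.
Qed.

Local Close Scope ring_scope.

Theorem theorem1p1 (n : nat) (hn : (0 < n)%N) :
  mu n 2 = ceil_div (2 * n) 3 /\
  ((2 <= n)%N ->
     mu_star n 2 = (2 * ceil_div n 3)%N /\
     ~~ odd (2 * ceil_div n 3) /\ (mu n 2 <= 2 * ceil_div n 3)%N /\
     (forall k : nat, ~~ odd k -> (mu n 2 <= k)%N -> (2 * ceil_div n 3 <= k)%N)).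
Proof.
case: n hn => [//|N] _.
have ceil_le : ceil_div (2 * N.+1) 3 <= N.+1 by rewrite /ceil_div; lia.
have mu_eq : mu N.+1 2 = ceil_div (2 * N.+1) 3.
  apply/anti_leq; rewrite (minM_ge ceil_le (@mu2_ge _)) andbT.
  by apply: leq_trans (mu2_le N) _; rewrite /ceil_div; lia.
split=> // N1; rewrite mu_eq.
have mu_star_eq : mu_star N.+1 2 = 2 * ceil_div N.+1 3.
  apply/anti_leq; rewrite mu_star2_le //=.
  by apply: minM_ge (@mu_star2_ge _); rewrite /ceil_div; lia.
by rewrite /ceil_div in mu_star_eq *; repeat split => //; lia.
Qed.
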